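(* Let $T$ be a complete first-order theory with monster model $\mathfrak C$. All complete types in $S(\emptyset)$, in arbitrary (possibly unboundedly many) variables, are amenable if and only if all finitary complete types in $S(\emptyset)$ (i.e. in finitely many variables) are amenable.
   Context: $\mathfrak C$ is $\kappa$-saturated and strongly $\kappa$-homogeneous for a large $\kappa$. For a type $\pi(\bar x)$ over $\emptyset$, $S_\pi(\mathfrak C)=\{q\in S_{\bar x}(\mathfrak C):\pi\subseteq q\}$ with the natural $\mathrm{Aut}(\mathfrak C)$-action; $\pi$ is amenable if there is an $\mathrm{Aut}(\mathfrak C)$-invariant regular Borel probability measure on $S_\pi(\mathfrak C)$ (equivalently, an $\mathrm{Aut}(\mathfrak C)$-invariant finitely additive probability measure on $\mathfrak C$-definable sets in variables $\bar x$ giving measure $0$ to each formula inconsistent with $\pi$). *)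

From Stdlib Require Import Reals List.
Open Scope R_scope.

Set Implicit Arguments.

Definition arg (n : nat) : Type := { i : nat | (i < n)%nat }.

Record language : Type := Language {
  func : Type;
  rel : Type;
  farity : func -> nat;
  rarity : rel -> nat }.

Inductive term (L : language) (X : Type) : Type :=
| TVar : X -> term L X
| TApp : forall f : func L, (arg (farity L f) -> term L X) -> term L X.

(* formulas with free variables from X; FAll binds the new variable None *)
Inductive formula (L : language) (X : Type) : Type :=
| FBot : formula L X
| FEq : term L X -> term L X -> formula L X
| FRel : forall r : rel L, (arg (rarity L r) -> term L X) -> formula L X
| FImp : formula L X -> formula L X -> formula L X
| FAll : formula L (option X) -> formula L X.

Arguments FBot {L X}.
Arguments FEq {L X}.
Arguments FRel {L X}.
Arguments FImp {L X}.
Arguments FAll {L X}.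

Definition FNeg {L X} (p : formula L X) : formula L X := FImp p FBot.
Definition FTop {L X} : formula L X := FNeg FBot.
Definition FOr {L X} (p q : formula L X) : formula L X := FImp (FNeg p) q.

Fixpoint tmap {L : language} {X Y : Type} (h : X -> Y) (t : term L X) : term L Y :=
  match t with
  | TVar _ x => TVar L (h x)
  | TApp f a => TApp f (fun i => tmap h (a i))
  end.

Fixpoint fmap {L : language} {X Y : Type} (h : X -> Y) (p : formula L X)
  : formula L Y :=
  match p with
  | FBot => FBot
  | FEq t u => FEq (tmap h t) (tmap h u)
  | FRel r a => FRel r (fun i => tmap h (a i))
  | FImp p q => FImp (fmap h p) (fmap h q)
  | FAll p => FAll (fmap (option_map h) p)
  end.

Record structure (L : language) : Type := Structure {
  dom : Type;
  ifun : forall f : func L, (arg (farity L f) -> dom) -> dom;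
  irel : forall r : rel L, (arg (rarity L r) -> dom) -> Prop }.

Arguments dom {L}.
Arguments ifun {L}.
Arguments irel {L}.

Definition scons {D X : Type} (m : D) (s : X -> D) : option X -> D :=
  fun o => match o with Some x => s x | None => m end.

Fixpoint teval {L : language} (M : structure L) {X : Type} (s : X -> dom M)
  (t : term L X) : dom M :=
  match t with
  | TVar _ x => s x
  | TApp f a => ifun M f (fun i => teval M s (a i))
  end.

Fixpoint sat {L : language} (M : structure L) {X : Type} (s : X -> dom M)
  (p : formula L X) : Prop :=
  match p with
  | FBot => False
  | FEq t u => teval M s t = teval M s u
  | FRel r a => irel M r (fun i => teval M s (a i))
  | FImp p q => sat M s p -> sat M s q
  | FAll p => forall m : dom M, sat M (scons m s) p
  end.

Definition automorphism {L : language} (M : structure L) (g : dom M -> dom M)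
  : Prop :=
  (exists h : dom M -> dom M, (forall x, h (g x) = x) /\ (forall y, g (h y) = y))
  /\ (forall f a, g (ifun M f a) = ifun M f (fun i => g (a i)))
  /\ (forall r a, irel M r a <-> irel M r (fun i => g (a i))).

Definition card_le (A B : Type) : Prop :=
  exists f : A -> B, forall x y, f x = f y -> x = y.
Definition card_lt (A B : Type) : Prop := card_le A B /\ ~ card_le B A.

Definition saturated {L : language} (K : Type) (M : structure L) : Prop :=
  forall (A : Type) (a : A -> dom M), card_lt A K ->
  forall q : formula L (option A) -> Prop,
    (forall l : list (formula L (option A)), Forall q l ->
       exists m : dom M, Forall (sat M (scons m a)) l) ->
    exists m : dom M, forall p, q p -> sat M (scons m a) p.

Definition strongly_homogeneous {L : language} (K : Type) (M : structure L)
  : Prop :=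
  forall (A : Type) (a b : A -> dom M), card_lt A K ->
    (forall p : formula L A, sat M a p <-> sat M b p) ->
    exists g, automorphism M g /\ forall x, g (a x) = b x.

(* assignment for formulas with parameters from C : variables inl, params inr *)
Definition passign {L : language} (C : structure L) {I : Type}
  (s : I -> dom C) : I + dom C -> dom C :=
  fun v => match v with inl i => s i | inr c => c end.

Definition psat {L : language} (C : structure L) {I : Type} (s : I -> dom C)
  (p : formula L (I + dom C)) : Prop := sat C (passign C s) p.

(* complete type over the empty set (relative to Th(C)) in variables I:
   a finitely satisfiable set of L-formulas in the variables I containing
   each formula or its negation *)
Definition complete_type {L : language} (C : structure L) {I : Type}
  (p : formula L I -> Prop) : Prop :=
  (forall l : list (formula L I), Forall p l ->
     exists s : I -> dom C, Forall (sat C s) l)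
  /\ (forall q : formula L I, p q \/ p (FNeg q)).

Definition inconsistent_with {L : language} (C : structure L) {I : Type}
  (p : formula L I -> Prop) (q : formula L (I + dom C)) : Prop :=
  exists l : list (formula L I), Forall p l /\
    ~ exists s : I -> dom C,
        Forall (sat C s) l /\ psat C s q.

Definition act {L : language} (C : structure L) {I : Type}
  (g : dom C -> dom C) (q : formula L (I + dom C)) : formula L (I + dom C) :=
  fmap (fun v => match v with inl i => inl i | inr c => inr (g c) end) q.

(* p is amenable: there is an Aut(C)-invariant finitely additive probability
   measure on the C-definable sets in the variables I (definable sets are
   represented by formulas with parameters, modulo equivalence in C) which
   vanishes on the definable sets inconsistent with p *)
Definition amenable {L : language} (C : structure L) {I : Type}
  (p : formula L I -> Prop) : Prop :=
  exists mu : formula L (I + dom C) -> R,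
    (forall q q', (forall s, psat C s q <-> psat C s q') -> mu q = mu q')
    /\ (forall q, 0 <= mu q)
    /\ mu FTop = 1
    /\ (forall q q', (forall s, ~ (psat C s q /\ psat C s q')) ->
          mu (FOr q q') = mu q + mu q')
    /\ (forall g q, automorphism C g -> mu (act C g q) = mu q)
    /\ (forall q, inconsistent_with C p q -> mu q = 0).

(* A complete type p in variables I is the directed union of its restrictions
   p_F to the formulas whose free variables lie in a finite set F.  Each p_F is
   amenable: renaming the variables of F to 0, ..., n-1 pulls p back to a
   complete type in n variables, and an invariant measure for it pushes forward
   to one vanishing on every set inconsistent with p_F.  An ultralimit of these
   measures, along an ultrafilter refining the order filter on the finite sets
   F, is again an Aut(C)-invariant finitely additive probability measure, and
   it vanishes on every set inconsistent with p since such an inconsistency is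
   witnessed by finitely many formulas of p. *)

From Stdlib Require Import Reals List Lia Lra Classical ClassicalEpsilon.
From Stdlib Require Import FunctionalExtensionality Peano_dec.
From mathcomp Require classical_sets filter.
Open Scope R_scope.

Section Syntax.
Context {L : language}.

Lemma tmap_ext {X Y} (h h' : X -> Y) (t : term L X) :
  (forall x, h x = h' x) -> tmap h t = tmap h' t.
Proof.
  intro E; induction t as [x|f a IH]; simpl.
  - now rewrite E.
  - f_equal; apply functional_extensionality; intro i; apply IH.
Qed.

Lemma fmap_ext {X Y} (h h' : X -> Y) (p : formula L X) :
  (forall x, h x = h' x) -> fmap h p = fmap h' p.
Proof.
  revert Y h h';
    induction p as [X|X t u|X r a|X p IHp q IHq|X p IH]; intros Y h h' E; simpl.
  - reflexivity.
  - now rewrite (tmap_ext _ _ t E), (tmap_ext _ _ u E).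
  - f_equal; apply functional_extensionality; intro i; now apply tmap_ext.
  - now rewrite (IHp _ _ _ E), (IHq _ _ _ E).
  - f_equal; apply IH; intros [x|]; simpl; now rewrite ?E.
Qed.

Lemma tmap_tmap {X Y Z} (h : Y -> Z) (g : X -> Y) (t : term L X) :
  tmap h (tmap g t) = tmap (fun x => h (g x)) t.
Proof.
  induction t as [x|f a IH]; simpl; auto.
  f_equal; apply functional_extensionality; intro i; apply IH.
Qed.

Lemma fmap_fmap {X Y Z} (h : Y -> Z) (g : X -> Y) (p : formula L X) :
  fmap h (fmap g p) = fmap (fun x => h (g x)) p.
Proof.
  revert Y Z h g;
    induction p as [X|X t u|X r a|X p IHp q IHq|X p IH]; intros Y Z h g; simpl.
  - reflexivity.
  - now rewrite !tmap_tmap.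
  - f_equal; apply functional_extensionality; intro i; now rewrite tmap_tmap.
  - now rewrite IHp, IHq.
  - f_equal; rewrite IH; apply fmap_ext; now intros [x|].
Qed.

Lemma teval_tmap (M : structure L) {X Y} (h : X -> Y) (s : Y -> dom M)
  (s' : X -> dom M) (t : term L X) :
  (forall x, s (h x) = s' x) -> teval M s (tmap h t) = teval M s' t.
Proof.
  intro E; induction t as [x|f a IH]; simpl; auto.
  f_equal; apply functional_extensionality; intro i; apply IH.
Qed.

Lemma sat_fmap (M : structure L) {X Y} (h : X -> Y) (s : Y -> dom M)
  (s' : X -> dom M) (p : formula L X) :
  (forall x, s (h x) = s' x) -> (sat M s (fmap h p) <-> sat M s' p).
Proof.
  revert Y h s s';
    induction p as [X|X t u|X r a|X p IHp q IHq|X p IH]; intros Y h s s' E; simpl.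
  - tauto.
  - now rewrite !(teval_tmap M h s s' _ E).
  - replace (fun i => teval M s (tmap h (a i))) with (fun i => teval M s' (a i));
      [tauto|].
    apply functional_extensionality; intro i; now rewrite (teval_tmap M h s s' _ E).
  - rewrite (IHp _ h s s' E), (IHq _ h s s' E); tauto.
  - assert (E' : forall m o, scons m s (option_map h o) = scons m s' o)
      by (intros m [x|]; simpl; auto).
    split; intros H m; apply (IH _ _ _ _ (E' m)), H.
Qed.

Fixpoint tvars_in {X} (P : X -> Prop) (t : term L X) : Prop :=
  match t with
  | TVar x => P x
  | TApp _ a => forall i, tvars_in P (a i)
  end.

Definition option_pred {X} (P : X -> Prop) (o : option X) : Prop :=
  match o with Some x => P x | None => True end.

Fixpoint fvars_in {X} (P : X -> Prop) (p : formula L X) : Prop :=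
  match p with
  | FBot => True
  | FEq t u => tvars_in P t /\ tvars_in P u
  | FRel _ a => forall i, tvars_in P (a i)
  | FImp p q => fvars_in P p /\ fvars_in P q
  | FAll p => fvars_in (option_pred P) p
  end.

Definition supported {X} (G : list X) (p : formula L X) : Prop :=
  fvars_in (fun x => In x G) p.

Lemma tvars_in_mono {X} (P Q : X -> Prop) (t : term L X) :
  (forall x, P x -> Q x) -> tvars_in P t -> tvars_in Q t.
Proof. intro E; induction t; simpl; auto. Qed.

Lemma fvars_in_mono {X} (P Q : X -> Prop) (p : formula L X) :
  (forall x, P x -> Q x) -> fvars_in P p -> fvars_in Q p.
Proof.
  revert P Q; induction p as [X|X t u|X r a|X p IHp q IHq|X p IH];
    intros P Q E; simpl.
  - auto.
  - intros [Ht Hu]; split; eapply tvars_in_mono; eauto.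
  - intros Ha i; eapply tvars_in_mono; eauto.
  - intros [Hp Hq]; split; eauto.
  - apply IH; intros [x|]; simpl; auto.
Qed.

Lemma supported_incl {X} (G G' : list X) (p : formula L X) :
  incl G G' -> supported G p -> supported G' p.
Proof. apply fvars_in_mono. Qed.

Lemma tmap_fixed {X} (h : X -> X) (P : X -> Prop) (t : term L X) :
  (forall x, P x -> h x = x) -> tvars_in P t -> tmap h t = t.
Proof.
  intro E; induction t as [x|f a IH]; simpl; intro V.
  - now rewrite E.
  - f_equal; apply functional_extensionality; intro i; apply IH, V.
Qed.

Lemma fmap_fixed {X} (h : X -> X) (P : X -> Prop) (p : formula L X) :
  (forall x, P x -> h x = x) -> fvars_in P p -> fmap h p = p.
Proof.
  revert h P; induction p as [X|X t u|X r a|X p IHp q IHq|X p IH];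
    intros h P E; simpl.
  - reflexivity.
  - intros [Ht Hu]; now rewrite (tmap_fixed h P t), (tmap_fixed h P u).
  - intro V; f_equal; apply functional_extensionality; intro i;
      exact (tmap_fixed h P (a i) E (V i)).
  - intros [Hp Hq]; now rewrite (IHp h P), (IHq h P).
  - intro V; f_equal; apply (IH _ (option_pred P)); [|exact V].
    intros [x|] Hx; simpl in *; now rewrite ?E.
Qed.

Lemma arg_common_list {A} (n : nat) (Q : arg n -> list A -> Prop) :
  (forall i G G', incl G G' -> Q i G -> Q i G') ->
  (forall i, exists G, Q i G) -> exists G, forall i, Q i G.
Proof.
  revert Q; induction n as [|n IHn]; intros Q Qmono HQ.
  - exists nil; intros [i Hi]; inversion Hi.
  - set (widen := fun k : arg n =>
           exist (fun i => (i < S n)%nat) (proj1_sig k)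
             (Nat.lt_lt_succ_r _ _ (proj2_sig k))).
    destruct (IHn (fun k => Q (widen k))) as [G1 H1];
      [intros k; apply Qmono | intros k; apply HQ|].
    destruct (HQ (exist _ n (Nat.lt_succ_diag_r n))) as [G2 H2].
    exists (G1 ++ G2); intros [k Hk].
    destruct (Nat.eq_dec k n) as [->|Hne].
    + rewrite (le_unique _ _ Hk (Nat.lt_succ_diag_r n)).
      eapply Qmono; [|exact H2]; intros x Hx; apply in_or_app; auto.
    + assert (Hk' : (k < n)%nat) by lia.
      specialize (H1 (exist _ k Hk')); unfold widen in H1; simpl in H1.
      rewrite (le_unique _ _ Hk (Nat.lt_lt_succ_r k n Hk')).
      eapply Qmono; [|exact H1]; intros x Hx; apply in_or_app; auto.
Qed.

Lemma tvars_in_finite {X} (t : term L X) : exists G, tvars_in (fun x => In x G) t.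
Proof.
  induction t as [x|f a IH]; simpl.
  - exists (x :: nil); now left.
  - apply arg_common_list; auto.
    intros i G G' HG; apply tvars_in_mono, HG.
Qed.

Lemma fvars_in_finite {X} (p : formula L X) : exists G, supported G p.
Proof.
  unfold supported; induction p as [X|X t u|X r a|X p IHp q IHq|X p IH]; simpl.
  - now exists nil.
  - destruct (tvars_in_finite t) as [G1 H1], (tvars_in_finite u) as [G2 H2].
    exists (G1 ++ G2); split; eapply tvars_in_mono; eauto;
      intros; apply in_or_app; auto.
  - apply arg_common_list; [|intro i; apply tvars_in_finite].
    intros i G G' HG; apply tvars_in_mono, HG.
  - destruct IHp as [G1 H1], IHq as [G2 H2].
    exists (G1 ++ G2); split; eapply fvars_in_mono; eauto;
      intros; apply in_or_app; auto.
  - destruct IH as [G H].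
    exists (flat_map (fun o => match o with Some x => x :: nil | None => nil end) G).
    eapply fvars_in_mono; [|exact H]; intros [x|] Hx; simpl; auto.
    apply in_flat_map; exists (Some x); simpl; auto.
Qed.

Lemma supported_list {X} (l : list (formula L X)) :
  exists G, Forall (supported G) l.
Proof.
  induction l as [|phi l [G HG]].
  - now exists nil.
  - destruct (fvars_in_finite phi) as [G1 H1].
    exists (G1 ++ G); constructor.
    + eapply supported_incl; [|exact H1]; intros x Hx; apply in_or_app; auto.
    + eapply Forall_impl; [|exact HG]; intros psi; apply supported_incl.
      intros x Hx; apply in_or_app; auto.
Qed.

End Syntax.

Lemma finite_retract {I : Type} (F : list I) :
  exists n (e : arg n -> I) (r : I -> arg n), forall i, In i F -> e (r i) = i.
Proof.
  destruct (classic (inhabited I)) as [[i0]|HI].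
  2: { exists 0%nat, (fun k => match Nat.nlt_0_r _ (proj2_sig k) with end),
         (fun i => match HI (inhabits i) with end).
       intro i; destruct (HI (inhabits i)). }
  induction F as [|j F IH].
  - exists 1%nat, (fun _ => i0), (fun _ => exist _ 0%nat Nat.lt_0_1); intros i [].
  - destruct IH as (n & e & r & Her).
    exists (S n),
      (fun k : arg (S n) =>
         match Compare_dec.lt_dec (proj1_sig k) n with
         | left h => e (exist _ (proj1_sig k) h)
         | right _ => j
         end),
      (fun i =>
         match excluded_middle_informative (i = j) with
         | left _ => exist _ n (Nat.lt_succ_diag_r n)
         | right _ =>
             exist _ (proj1_sig (r i)) (Nat.lt_lt_succ_r _ _ (proj2_sig (r i)))
         end).
    intros i Hi.
    destruct (excluded_middle_informative (i = j)) as [->|Hij]; simpl.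
    + destruct (Compare_dec.lt_dec n n) as [Hnn|];
        [destruct (Nat.lt_irrefl n Hnn)|reflexivity].
    + destruct Hi as [->|Hi]; [contradiction|].
      rewrite <- (Her i Hi) at 2; destruct (r i) as [k Hk]; simpl.
      destruct (Compare_dec.lt_dec k n) as [Hk'|]; [|contradiction].
      now rewrite (le_unique _ _ Hk' Hk).
Qed.

Lemma complete_type_comap {L : language} (C : structure L) {I J : Type}
  (e : J -> I) (p : formula L I -> Prop) :
  complete_type C p -> complete_type C (fun psi => p (fmap e psi)).
Proof.
  intros [Hfs Hcompl]; split.
  - intros l Hl.
    destruct (Hfs (map (fmap e) l) (proj2 (Forall_map _ _ _) Hl)) as [s Hs].
    exists (fun j => s (e j)).
    rewrite Forall_map in Hs; eapply Forall_impl; [|exact Hs].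
    intro psi; now apply sat_fmap.
  - intro psi; apply Hcompl.
Qed.

Definition rename_vars {I J D : Type} (r : I -> J) (v : I + D) : J + D :=
  match v with inl i => inl (r i) | inr c => inr c end.

Lemma psat_rename {L : language} (C : structure L) {I J : Type} (r : I -> J)
  (s : J -> dom C) (q : formula L (I + dom C)) :
  psat C s (fmap (rename_vars r) q) <-> psat C (fun i => s (r i)) q.
Proof. apply sat_fmap; now intros [i|c]. Qed.

Section InvariantMeasures.
Context {L : language} (C : structure L) {I : Type}.

Record invariant_measure (mu : formula L (I + dom C) -> R) : Prop := {
  measure_ext : forall q q', (forall s, psat C s q <-> psat C s q') -> mu q = mu q';
  measure_ge0 : forall q, 0 <= mu q;
  measure_top : mu FTop = 1;
  measure_disjoint_or : forall q q', (forall s, ~ (psat C s q /\ psat C s q')) ->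
    mu (FOr q q') = mu q + mu q';
  measure_act : forall g q, automorphism C g -> mu (act C g q) = mu q }.

Lemma amenableP (p : formula L I -> Prop) :
  amenable C p <-> exists mu, invariant_measure mu /\
    forall q, inconsistent_with C p q -> mu q = 0.
Proof.
  split.
  - intros (mu & Hext & Hge0 & Htop & Hor & Hact & Hp); now exists mu.
  - intros (mu & [Hext Hge0 Htop Hor Hact] & Hp); now exists mu.
Qed.

Lemma measure_le1 mu q : invariant_measure mu -> mu q <= 1.
Proof.
  intros [Hext Hge0 Htop Hor _].
  assert (Hsplit : mu (FOr q (FNeg q)) = mu q + mu (FNeg q))
    by (apply Hor; intros s [Hq Hnq]; exact (Hnq Hq)).
  assert (Hfull : mu (FOr q (FNeg q)) = mu FTop)
    by (apply Hext; intro s; unfold psat, FOr, FTop, FNeg; simpl; tauto).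
  specialize (Hge0 (FNeg q)); lra.
Qed.

End InvariantMeasures.

Arguments measure_ext {L C I mu}.
Arguments measure_ge0 {L C I mu}.
Arguments measure_top {L C I mu}.
Arguments measure_disjoint_or {L C I mu}.
Arguments measure_act {L C I mu}.

Lemma invariant_measure_comap {L : language} (C : structure L) {I J : Type}
  (r : I -> J) (mu : formula L (J + dom C) -> R) :
  invariant_measure C mu ->
  invariant_measure C (fun q => mu (fmap (rename_vars r) q)).
Proof.
  intros [Hext Hge0 Htop Hor Hact]; split.
  - intros q q' E; apply Hext; intro s; rewrite !psat_rename; apply E.
  - intro q; apply Hge0.
  - exact Htop.
  - intros q q' E; apply (Hor (fmap (rename_vars r) q)).
    intro s; rewrite !psat_rename; apply E.
  - intros g q Hg; rewrite <- (Hact g (fmap (rename_vars r) q) Hg); f_equal.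
    unfold act; rewrite !fmap_fmap; apply fmap_ext; intros [i|c]; reflexivity.
Qed.

Record ultrafilter {D : Type} (U : (D -> Prop) -> Prop) : Prop := {
  ultrafilter_and : forall A B, U A -> U B -> U (fun x => A x /\ B x);
  ultrafilter_mono : forall A B : D -> Prop, (forall x, A x -> B x) -> U A -> U B;
  ultrafilter_ex : forall A, U A -> exists x, A x;
  ultrafilter_total : forall A, U A \/ U (fun x => ~ A x) }.

Arguments ultrafilter_and {D U}.
Arguments ultrafilter_mono {D U}.
Arguments ultrafilter_ex {D U}.
Arguments ultrafilter_total {D U}.

Lemma ultrafilter_of_base {D J : Type} (B : J -> D -> Prop) :
  inhabited J ->
  (forall i j, exists k, forall x, B k x -> B i x /\ B j x) ->
  (forall j, exists x, B j x) ->
  exists U, ultrafilter U /\ forall j, U (B j).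
Proof.
  intros [j0] Hdir Hne.
  assert (FB : filter.Filter (filter.filter_from classical_sets.setT B)).
  { apply filter.filter_fromT_filter; [now exists j0|].
    intros i j; destruct (Hdir i j) as [k Hk]; exists k; intros x Hx; apply Hk, Hx. }
  assert (PB : filter.ProperFilter (filter.filter_from classical_sets.setT B))
    by (apply filter.filter_from_proper; [exact FB|]; intros j _; apply Hne).
  destruct (filter.ultraFilterLemma PB) as [U [UU HBU]].
  exists U; split; [split|].
  - intros A A' HA HA'; exact (@filter.filterI _ U _ A A' HA HA').
  - intros A A' HAA' HA; exact (@filter.filterS _ U _ A A' HAA' HA).
  - intros A HA; exact (filter.filter_ex HA).
  - intro A; exact (@filter.in_ultra_setVsetC _ U A UU).
  - intro j; apply HBU; exists j; [constructor|]; intros x Hx; exact Hx.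
Qed.

Section Ultralimit.
Context {D : Type} {U : (D -> Prop) -> Prop} (HU : ultrafilter U).

Lemma ultrafilter_all (A : D -> Prop) : (forall x, A x) -> U A.
Proof.
  intro HA; destruct (ultrafilter_total HU A) as [H|H]; [exact H|].
  destruct (ultrafilter_ex HU _ H) as [x Hx]; contradiction (Hx (HA x)).
Qed.

Definition is_ulim (f : D -> R) (a : R) : Prop :=
  forall eps, 0 < eps -> U (fun x => Rabs (f x - a) < eps).

(* The ultralimit is the supremum of the values that f eventually exceeds. *)
Lemma ulim_exists (f : D -> R) (lo hi : R) :
  (forall x, lo <= f x <= hi) -> exists a, is_ulim f a.
Proof.
  intro Hb.
  set (S := fun y => U (fun x => y <= f x)).
  assert (Sbound : bound S).
  { exists hi; intros y Hy; destruct (ultrafilter_ex HU _ Hy) as [x Hx].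
    specialize (Hb x); lra. }
  assert (Slo : S lo) by (apply ultrafilter_all; apply Hb).
  destruct (completeness S Sbound (ex_intro _ lo Slo)) as [a [Hub Hlub]].
  exists a; intros eps Heps.
  assert (Hbelow : exists y, S y /\ a - eps < y).
  { apply NNPP; intro N; enough (a <= a - eps) by lra.
    apply Hlub; intros y Hy; apply Rnot_lt_le; intro Hlt; apply N; now exists y. }
  destruct Hbelow as [y [Hy Hya]].
  assert (Habove : U (fun x => ~ a + eps / 2 <= f x)).
  { destruct (ultrafilter_total HU (fun x => a + eps / 2 <= f x)) as [H|H]; [|exact H].
    enough (a + eps / 2 <= a) by lra; now apply Hub. }
  eapply (ultrafilter_mono HU); [|exact (ultrafilter_and HU _ _ Hy Habove)].
  intros x [H1 H2]; apply Rabs_def1; lra.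
Qed.

Lemma ulim_unique (f : D -> R) (a b : R) : is_ulim f a -> is_ulim f b -> a = b.
Proof.
  intros Ha Hb; apply NNPP; intro Hab.
  set (eps := Rabs (a - b) / 2).
  assert (Heps : 0 < eps)
    by (assert (0 < Rabs (a - b)) by (apply Rabs_pos_lt; lra); unfold eps; lra).
  destruct (ultrafilter_ex HU _ (ultrafilter_and HU _ _ (Ha eps Heps) (Hb eps Heps)))
    as [x [H1 H2]].
  revert H1 H2; unfold eps, Rabs; repeat destruct Rcase_abs; lra.
Qed.

Lemma ulim_ext (f g : D -> R) (a : R) :
  U (fun x => f x = g x) -> is_ulim f a -> is_ulim g a.
Proof.
  intros Hfg Hf eps Heps.
  eapply (ultrafilter_mono HU); [|exact (ultrafilter_and HU _ _ Hfg (Hf eps Heps))].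
  intros x [<- Hx]; exact Hx.
Qed.

Lemma ulim_const (c : R) : is_ulim (fun _ => c) c.
Proof.
  intros eps Heps; apply ultrafilter_all; intros _.
  now rewrite Rminus_diag, Rabs_R0.
Qed.

Lemma ulim_plus (f g : D -> R) (a b : R) :
  is_ulim f a -> is_ulim g b -> is_ulim (fun x => f x + g x) (a + b).
Proof.
  intros Hf Hg eps Heps.
  assert (Heps2 : 0 < eps / 2) by lra.
  eapply (ultrafilter_mono HU);
    [|exact (ultrafilter_and HU _ _ (Hf _ Heps2) (Hg _ Heps2))].
  intros x; unfold Rabs; repeat destruct Rcase_abs; lra.
Qed.

Lemma ulim_ge0 (f : D -> R) (a : R) : is_ulim f a -> (forall x, 0 <= f x) -> 0 <= a.
Proof.
  intros Hf Hge0; apply Rnot_lt_le; intro Ha.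
  destruct (ultrafilter_ex HU _ (Hf (- a) ltac:(lra))) as [x Hx].
  specialize (Hge0 x); revert Hx; unfold Rabs; destruct Rcase_abs; lra.
Qed.

End Ultralimit.

Arguments is_ulim {D} U.

Lemma invariant_measure_ulim {L : language} (C : structure L) {I D : Type}
  (U : (D -> Prop) -> Prop) (nu : D -> formula L (I + dom C) -> R) :
  ultrafilter U -> (forall x, invariant_measure C (nu x)) ->
  exists mu, invariant_measure C mu /\ forall q, is_ulim U (fun x => nu x q) (mu q).
Proof.
  intros HU Hnu.
  destruct (choice (fun q a => is_ulim U (fun x => nu x q) a)) as [mu Hmu].
  { intro q; apply (ulim_exists HU _ 0 1); intro x; split.
    - apply (measure_ge0 (Hnu x)).
    - apply measure_le1, Hnu. }
  assert (Hlim : forall f q, (forall x, f x = nu x q) -> is_ulim U f (mu q)).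
  { intros f q Hf; apply (ulim_ext HU (fun x => nu x q)); [|apply Hmu].
    apply (ultrafilter_all HU); auto. }
  exists mu; split; [split|exact Hmu].
  - intros q q' E; apply (ulim_unique HU (fun x => nu x q')); [|apply Hmu].
    apply Hlim; intro x; apply (measure_ext (Hnu x)); intro s; now rewrite E.
  - intro q; apply (ulim_ge0 HU _ _ (Hmu q)); intro x; apply (measure_ge0 (Hnu x)).
  - apply (ulim_unique HU (fun _ => 1)); [|apply (ulim_const HU)].
    apply Hlim; intro x; symmetry; apply (measure_top (Hnu x)).
  - intros q q' E; apply (ulim_unique HU (fun x => nu x q + nu x q')).
    + apply Hlim; intro x; symmetry; apply (measure_disjoint_or (Hnu x)), E.
    + apply (ulim_plus HU); apply Hmu.
  - intros g q Hg; apply (ulim_unique HU (fun x => nu x q)); [|apply Hmu].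
    apply Hlim; intro x; symmetry; apply (measure_act (Hnu x)), Hg.
Qed.

Lemma inconsistent_with_mono {L : language} (C : structure L) {I : Type}
  (p p' : formula L I -> Prop) (q : formula L (I + dom C)) :
  (forall phi, p phi -> p' phi) -> inconsistent_with C p q -> inconsistent_with C p' q.
Proof.
  intros Hpp' (l & Hl & Hn); exists l; split; [|exact Hn].
  eapply Forall_impl; [exact Hpp'|exact Hl].
Qed.

Lemma amenable_directed_union {L : language} (C : structure L) {I J : Type}
  (P : J -> formula L I -> Prop) (p : formula L I -> Prop) :
  inhabited J ->
  (forall i j, exists k,
      (forall phi, P i phi -> P k phi) /\ (forall phi, P j phi -> P k phi)) ->
  (forall l, Forall p l -> exists j, Forall (P j) l) ->
  (forall j, amenable C (P j)) -> amenable C p.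
Proof.
  intros HJ Hdir Hcover HP.
  set (cone j k := forall phi, P j phi -> P k phi).
  destruct (choice _ (fun j => proj1 (amenableP C (P j)) (HP j))) as [nu Hnu].
  destruct (ultrafilter_of_base cone HJ) as (U & HU & Hcone).
  { intros i j; destruct (Hdir i j) as (k & Hik & Hjk).
    exists k; intros k' Hkk'; split; intros phi Hphi; apply Hkk'; auto. }
  { intro j; exists j; intros phi Hphi; exact Hphi. }
  destruct (invariant_measure_ulim C U nu HU (fun j => proj1 (Hnu j)))
    as (mu & Hmu & Hlim).
  apply amenableP; exists mu; split; [exact Hmu|].
  intros q (l & Hl & Hn).
  destruct (Hcover l Hl) as [j Hj].
  assert (Hqj : inconsistent_with C (P j) q) by (exists l; split; assumption).
  assert (Hzero : U (fun k => 0 = nu k q)).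
  { apply (ultrafilter_mono HU (cone j)); [|apply Hcone].
    intros k Hjk; symmetry; apply (proj2 (Hnu k)).
    exact (inconsistent_with_mono C _ _ q Hjk Hqj). }
  symmetry; apply (ulim_unique HU (fun k => nu k q)); [|apply Hlim].
  exact (ulim_ext HU _ _ _ Hzero (ulim_const HU 0)).
Qed.

Lemma amenable_supported_of_retract {L : language} (C : structure L) {I J : Type}
  (p : formula L I -> Prop) (e : J -> I) (r : I -> J) (F : list I) :
  (forall i, In i F -> e (r i) = i) ->
  amenable C (fun psi => p (fmap e psi)) ->
  amenable C (fun phi => p phi /\ supported F phi).
Proof.
  intros Her Hamen.
  apply amenableP in Hamen; destruct Hamen as (mu & Hmu & Hvan).
  apply amenableP; exists (fun q => mu (fmap (rename_vars r) q)).
  split; [now apply invariant_measure_comap|].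
  intros q (l & Hl & Hn); apply Hvan; exists (map (fmap r) l); split.
  - rewrite Forall_map; eapply Forall_impl; [|exact Hl].
    intros phi [Hphi HF]; rewrite fmap_fmap.
    now rewrite (fmap_fixed _ (fun i => In i F) phi Her HF).
  - intros (s & Hs & Hq); apply Hn; exists (fun i => s (r i)); split.
    + rewrite Forall_map in Hs; eapply Forall_impl; [|exact Hs].
      intro phi; now apply sat_fmap.
    + now apply psat_rename.
Qed.

Theorem lemma3p6 (L : language) (C : structure L) (K : Type)
  (HK : card_lt (func L + rel L + nat) K)
  (Hsat : saturated K C) (Hhom : strongly_homogeneous K C) :
  (forall (I : Type) (p : formula L I -> Prop),
      complete_type C p -> amenable C p)
  <->
  (forall (n : nat) (p : formula L (arg n) -> Prop),
      complete_type C p -> amenable C p).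
Proof.
  split; [intros Hall n; apply Hall|].
  intros Hfin I p Hp.
  apply (amenable_directed_union C (fun F phi => p phi /\ supported F phi)).
  - exact (inhabits nil).
  - intros F G; exists (F ++ G); split; intros phi [Hphi HS]; split; auto;
      eapply supported_incl; eauto; intros x Hx; apply in_or_app; auto.
  - intros l Hl; destruct (supported_list l) as [G HG]; exists G.
    rewrite Forall_forall in *; auto.
  - intro F; destruct (finite_retract F) as (n & e & r & Her).
    apply (amenable_supported_of_retract C p e r F Her), Hfin.
    now apply complete_type_comap.
Qed.
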